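(* Two quadruplets $(\Phi_1,\Phi_2,\Phi_3,\Phi_{123})$ and $(\Phi_{23},\Phi_{13},\Phi_{12},\Phi)$ of (generic) complex numbers can be regarded as the vertices of two reciprocal $(4,6)$ configurations (with the vertex correspondence described in the context) if and only if $$Q(\Phi_1,\Phi_2,\Phi_3,\Phi_{123})=Q(\Phi_{23},\Phi_{13},\Phi_{12},\Phi).$$
   Context: The plane is identified with $\mathbb{C}$; $Q(P_1,P_2,P_3,P_4)=\frac{(P_1-P_2)(P_3-P_4)}{(P_2-P_3)(P_4-P_1)}$ is the cross-ratio. A $(4,6)$ configuration consists of four points of the plane, each pair of which is joined by a circular arc (generalized circles, i.e. circles or lines, allowed), such that the circular extensions of all six arcs pass through one common point $\Phi_*$ (possibly $\infty$, in which case all arcs are straight segments). Equivalently, a $(4,6)$ configuration is the image under a Möbius transformation of four points joined pairwise by six straight segments. For the two quadruplets, the arcs correspond as follows: $\{\Phi_1,\Phi_2\}\leftrightarrow\{\Phi,\Phi_{12}\}$, $\{\Phi_2,\Phi_3\}\leftrightarrow\{\Phi,\Phi_{23}\}$, $\{\Phi_3,\Phi_1\}\leftrightarrow\{\Phi,\Phi_{13}\}$, $\{\Phi_1,\Phi_{123}\}\leftrightarrow\{\Phi_{13},\Phi_{12}\}$, $\{\Phi_2,\Phi_{123}\}\leftrightarrow\{\Phi_{12},\Phi_{23}\}$, $\{\Phi_3,\Phi_{123}\}\leftrightarrow\{\Phi_{23},\Phi_{13}\}$. Two $(4,6)$ configurations (with common points $\Phi_*$ and $\Phi_*'$) are reciprocally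 related if the six angles made by the arcs of one configuration equal those made by the corresponding arcs of the other; equivalently, if there are Möbius transformations sending $\Phi_*$ and $\Phi_*'$ to $\infty$ such that the resulting two four-point/six-segment figures, after a rotation of one of them, have all corresponding segments parallel, i.e. form reciprocal triangles $\Delta(\Phi_{23},\Phi_{13},\Phi_{12})$, $\Delta(\Phi_1,\Phi_2,\Phi_3)$ with interior points $\Phi$, $\Phi_{123}$ (edges $(\Phi_1,\Phi_2),(\Phi_2,\Phi_3),(\Phi_3,\Phi_1)$ parallel to $(\Phi,\Phi_{12}),(\Phi,\Phi_{23}),(\Phi,\Phi_{13})$, and $(\Phi_1,\Phi_{123}),(\Phi_2,\Phi_{123}),(\Phi_3,\Phi_{123})$ parallel to $(\Phi_{13},\Phi_{12}),(\Phi_{12},\Phi_{23}),(\Phi_{23},\Phi_{13})$). Usual reciprocal triangles are the special case where all arcs are straight. *)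

From HB Require Import structures.
From mathcomp Require Import all_boot all_order all_algebra.
From mathcomp Require Import complex.
Set Implicit Arguments. Unset Strict Implicit. Unset Printing Implicit Defensive.
Import Order.TTheory GRing.Theory Num.Theory.
Local Open Scope ring_scope.

Definition cross_ratio (R : rcfType) (P1 P2 P3 P4 : R[i]) : R[i] :=
  (P1 - P2) * (P3 - P4) / ((P2 - P3) * (P4 - P1)).

(* The Riemann sphere: None is the point at infinity. *)
Definition sphere (R : rcfType) := option R[i].

Record mobius (R : rcfType) := Mobius {
  mob_a : R[i]; mob_b : R[i]; mob_c : R[i]; mob_d : R[i];
  mob_det : mob_a * mob_d - mob_b * mob_c != 0 }.

Definition mob_app (R : rcfType) (M : mobius R) (z : sphere R) : sphere R :=
  let: Mobius a b c d _ := M in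
  match z with
  | None => if c == 0 then None else Some (a / c)
  | Some w => if c * w + d == 0 then None else Some ((a * w + b) / (c * w + d))
  end.

(* Image of a finite point, as a finite point (the value 0 is a dummy used
   only when the image is infinity, which never happens below since the
   vertices differ from the point sent to infinity). *)
Definition mob_img (R : rcfType) (M : mobius R) (z : R[i]) : R[i] :=
  odflt 0 (mob_app M (Some z)).

(* Two vectors of the plane are parallel: their ratio is real. *)
Definition parallel (R : rcfType) (p q : R[i]) : Prop :=
  'Im (p * q^*) = 0.

(* A (4,6) configuration: four pairwise distinct points P1..P4, the six arcs
   joining them all lying on circles through the common point Ps (which is
   on the Riemann sphere, possibly infinity, and distinct from the vertices;
   given Ps the six arcs are determined as the arcs of the circles through
   Ps and the two endpoints). *)
Definition config46 (R : rcfType) (P1 P2 P3 P4 : R[i]) (Ps : sphere R) : Prop :=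
  [&& P1 != P2, P1 != P3, P1 != P4, P2 != P3, P2 != P4 & P3 != P4] /\
  [/\ Ps <> Some P1, Ps <> Some P2, Ps <> Some P3 & Ps <> Some P4].

(* Reciprocity of the (4,6) configurations (F1,F2,F3,F123; Ps) and
   (F23,F13,F12,F; Ps'): there are Moebius transformations sending Ps and
   Ps' to infinity such that, after a rotation (by the unit complex number u)
   of the second figure, corresponding segments are parallel:
     (F1,F2)~(F,F12), (F2,F3)~(F,F23), (F3,F1)~(F,F13),
     (F1,F123)~(F13,F12), (F2,F123)~(F12,F23), (F3,F123)~(F23,F13). *)
Definition reciprocal46 (R : rcfType)
    (F1 F2 F3 F123 F23 F13 F12 F : R[i]) (Ps Ps' : sphere R) : Prop :=
  exists (M M' : mobius R) (u : R[i]),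
    [/\ mob_app M Ps = None, mob_app M' Ps' = None, `|u| = 1 &
    (let m := mob_img M in let m' := fun z => u * mob_img M' z in
    [/\ parallel (m F1 - m F2) (m' F - m' F12),
        parallel (m F2 - m F3) (m' F - m' F23) &
        parallel (m F3 - m F1) (m' F - m' F13)] /\
    [/\ parallel (m F1 - m F123) (m' F13 - m' F12),
        parallel (m F2 - m F123) (m' F12 - m' F23) &
        parallel (m F3 - m F123) (m' F23 - m' F13)])].

From HB Require Import structures.
From mathcomp Require Import all_boot all_order all_algebra.
From mathcomp Require Import complex.
From mathcomp Require Import ring lra.
Set Implicit Arguments. Unset Strict Implicit. Unset Printing Implicit Defensive.
Import Order.TTheory GRing.Theory Num.Theory.
Local Open Scope ring_scope.

(** Moebius transformations and rotations preserve cross-ratios, so everything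
   reduces to straight-line figures A = (A1, A2, A3, A4) and B = (B1, B2, B3, B4)
   whose corresponding edges are parallel.  Writing each B-edge as a real
   multiple of its A-edge and closing the triangles B2 B3 B4 and B1 B2 B4 gives
   two real linear relations between the vectors A1 - A4, A2 - A4, A3 - A4.
   These vectors span the plane since Q(A) is not real, so the two relations
   are proportional; this says that the products of the scaling factors of
   opposite edges agree, i.e. Q(B) = Q(A).  Conversely, every non-real q is the
   cross-ratio of a figure with no three vertices collinear, Maxwell's
   construction with signed areas as weights yields a reciprocal figure, and
   Moebius maps matching quadruplets of equal cross-ratios carry the given
   points onto these two figures. *)

Definition proportional3 (K : pzRingType) (x1 x2 x3 y1 y2 y3 : K) : Prop :=
  [/\ x1 * y2 = x2 * y1, x2 * y3 = x3 * y2 & x3 * y1 = x1 * y3].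

Lemma proportional3_trans (K : fieldType) (x1 x2 x3 y1 y2 y3 d1 d2 d3 : K) :
  x2 != 0 -> ~~ [&& d1 == 0, d2 == 0 & d3 == 0] ->
  proportional3 x1 x2 x3 d1 d2 d3 -> proportional3 y1 y2 y3 d1 d2 d3 ->
  proportional3 x1 x2 x3 y1 y2 y3.
Proof.
move=> x2_neq0 d_neq0 [x12 x23 _] [y12 y23 _].
have d2_neq0 : d2 != 0.
  apply: contra d_neq0 => /eqP d2_0.
  move: x12 x23; rewrite d2_0 !mulr0 => /esym/eqP + /eqP.
  by rewrite !mulf_eq0 (negPf x2_neq0) /= => -> ->; rewrite eqxx.
have ex1 : x1 = x2 * d1 / d2 by rewrite -x12 mulfK.
have ex3 : x3 = x2 * d3 / d2 by rewrite x23 mulfK.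
have ey1 : y1 = y2 * d1 / d2 by rewrite -y12 mulfK.
have ey3 : y3 = y2 * d3 / d2 by rewrite y23 mulfK.
by rewrite /proportional3 ex1 ex3 ey1 ey3; split; field.
Qed.

Section PlaneFigures.
Local Open Scope complex_scope.
Variable R : rcfType.

Definition wedge (p q : R[i]) : R :=
  complex.Re p * complex.Im q - complex.Im p * complex.Re q.

Lemma wedgexx p : wedge p p = 0.
Proof. by rewrite /wedge mulrC subrr. Qed.

Lemma wedgeC p q : wedge q p = - wedge p q.
Proof. by rewrite /wedge opprB [complex.Re q * _]mulrC [complex.Im q * _]mulrC. Qed.

Lemma wedge0l p : wedge 0 p = 0.
Proof. by rewrite /wedge /= !mul0r subrr. Qed.

Lemma wedge0r p : wedge p 0 = 0.
Proof. by rewrite /wedge /= !mulr0 subrr. Qed.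

Lemma wedge_lincomb (c a1 a2 a3 : R[i]) (u v w : R) :
  wedge c (u%:C * a1 + v%:C * a2 + w%:C * a3)
  = u * wedge c a1 + v * wedge c a2 + w * wedge c a3.
Proof. by case: c a1 a2 a3 => [? ?] [? ?] [? ?] [? ?]; rewrite /wedge /=; ring. Qed.

Lemma wedge_relation (u v w : R) (a1 a2 a3 : R[i]) :
  u%:C * a1 + v%:C * a2 + w%:C * a3 = 0 ->
  proportional3 u v w (wedge a2 a3) (wedge a3 a1) (wedge a1 a2).
Proof.
move=> rel; have wrel c := congr1 (wedge c) rel.
move: (wrel a1) (wrel a2) (wrel a3).
rewrite !wedge_lincomb !wedgexx !wedge0r (wedgeC a1 a2) (wedgeC a2 a3) (wedgeC a1 a3).
by split; lra.
Qed.

Lemma Im_div (p q : R[i]) :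
  complex.Im (p / q) = wedge q p / (complex.Re q ^+ 2 + complex.Im q ^+ 2).
Proof. by case: p q => [a b] [c d]; rewrite /wedge /=; ring. Qed.

Lemma parallelE (p q : R[i]) : parallel p q <-> wedge p q = 0.
Proof.
case: p q => [a b] [c d]; rewrite /parallel /wedge -complexIm /=.
split => [[] | h]; first by lra.
by apply/eqP; rewrite eq_complex /= eqxx andbT; apply/eqP; lra.
Qed.

Lemma parallel_scale (p : R[i]) (r : R) : parallel p (r%:C * p).
Proof. by rewrite parallelE; case: p => a b; rewrite /wedge /=; ring. Qed.

Lemma parallel_scaleP (p q : R[i]) : p != 0 ->
  parallel p q <-> exists r : R, q = r%:C * p.
Proof.
move=> p_neq0; split=> [|[r ->]]; last exact: parallel_scale.
rewrite parallelE; case: p q p_neq0 => [a b] [c d] p_neq0; rewrite /wedge /= => w0.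
have n_neq0 : a ^+ 2 + b ^+ 2 != 0.
  by apply: contra p_neq0; rewrite paddr_eq0 ?sqr_ge0 // !sqrf_eq0 => /andP[/eqP-> /eqP->].
exists ((a * c + b * d) / (a ^+ 2 + b ^+ 2)).
apply/eqP; rewrite eq_complex /=; apply/andP; split; apply/eqP.
- apply: (mulIf n_neq0); rewrite mul0r subr0 mulrAC divfK //.
  by transitivity ((a * c + b * d) * a - b * (a * d - b * c)); [ring | rewrite w0 mulr0 subr0].
- apply: (mulIf n_neq0); rewrite mul0r addr0 mulrAC divfK //.
  by transitivity ((a * c + b * d) * b + a * (a * d - b * c)); [ring | rewrite w0 mulr0 addr0].
Qed.

Lemma neq_scale (x y z : R[i]) (r : R) : x - y = r%:C * z ->
  (x != y) = (r != 0) && (z != 0).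
Proof. by move=> e; rewrite -subr_eq0 e mulf_eq0 fmorph_eq0 negb_or. Qed.

Definition collinear (P1 P2 P3 : R[i]) : bool := wedge (P2 - P1) (P3 - P1) == 0.

Lemma Im_cross_ratio_collinear (A1 A2 A3 A4 : R[i]) :
  collinear A4 A2 A3 -> collinear A4 A3 A1 -> collinear A4 A1 A2 ->
  'Im (cross_ratio A1 A2 A3 A4) = 0.
Proof.
have num_den_wedge : wedge ((A2 - A3) * (A4 - A1)) ((A1 - A2) * (A3 - A4))
    = complex.Re ((A1 - A4)^* * (A3 - A4)) * (wedge (A2 - A4) (A3 - A4)
        + wedge (A3 - A4) (A1 - A4) + wedge (A1 - A4) (A2 - A4))
      + complex.Re ((A1 - A2)^* * (A2 - A3)) * wedge (A3 - A4) (A1 - A4).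
  by case: A1 A2 A3 A4 => [? ?] [? ?] [? ?] [? ?]; rewrite /wedge /=; ring.
rewrite /collinear => /eqP D1 /eqP D2 /eqP D3.
by rewrite -complexIm /cross_ratio Im_div num_den_wedge D1 D2 D3 !addr0 !mulr0 addr0 mul0r.
Qed.

Lemma reciprocal_scalars (A1 A2 A3 A4 : R[i]) (r1 r2 r3 r4 r6 : R) :
  'Im (cross_ratio A1 A2 A3 A4) != 0 -> r1 != 0 ->
  r4%:C * (A1 - A4) = r1%:C * (A1 - A2) - r3%:C * (A3 - A1) ->
  r6%:C * (A3 - A4) = r3%:C * (A3 - A1) - r2%:C * (A2 - A3) ->
  r1 * r6 = r2 * r4.
Proof.
move=> Im_neq0 r1_neq0 e4 e6.
have rel4 : (r1 + r3 - r4)%:C * (A1 - A4) + (- r1)%:C * (A2 - A4) + (- r3)%:C * (A3 - A4) = 0.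
  transitivity (r1%:C * (A1 - A2) - r3%:C * (A3 - A1) - r4%:C * (A1 - A4)).
    by rewrite !(rmorphB, rmorphD, rmorphN); ring.
  by rewrite e4 subrr.
have rel6 : (- r3)%:C * (A1 - A4) + (- r2)%:C * (A2 - A4) + (r2 + r3 - r6)%:C * (A3 - A4) = 0.
  transitivity (r3%:C * (A3 - A1) - r2%:C * (A2 - A3) - r6%:C * (A3 - A4)).
    by rewrite !(rmorphB, rmorphD, rmorphN); ring.
  by rewrite e6 subrr.
have noncollinear : ~~ [&& wedge (A2 - A4) (A3 - A4) == 0, wedge (A3 - A4) (A1 - A4) == 0
                         & wedge (A1 - A4) (A2 - A4) == 0].
  by apply: contra Im_neq0 => /and3P[c1 c2 c3]; rewrite Im_cross_ratio_collinear.
have Nr1_neq0 : - r1 != 0 by rewrite oppr_eq0.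
have [x12 x23 _] := proportional3_trans Nr1_neq0 noncollinear
  (wedge_relation rel4) (wedge_relation rel6).
lra.
Qed.

Definition distinct4 (P1 P2 P3 P4 : R[i]) : bool :=
  [&& P1 != P2, P1 != P3, P1 != P4, P2 != P3, P2 != P4 & P3 != P4].

Definition reciprocal_figures (A1 A2 A3 A4 B1 B2 B3 B4 : R[i]) : Prop :=
  [/\ parallel (A1 - A2) (B4 - B3), parallel (A2 - A3) (B4 - B1)
    & parallel (A3 - A1) (B4 - B2)] /\
  [/\ parallel (A1 - A4) (B2 - B3), parallel (A2 - A4) (B3 - B1)
    & parallel (A3 - A4) (B1 - B2)].

Lemma cross_ratio_rescale (c : R[i]) (P1 P2 P3 P4 P1' P2' P3' P4' : R[i]) : c != 0 ->
  (P1' - P2') * (P3' - P4') = c * ((P1 - P2) * (P3 - P4)) ->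
  (P2' - P3') * (P4' - P1') = c * ((P2 - P3) * (P4 - P1)) ->
  cross_ratio P1' P2' P3' P4' = cross_ratio P1 P2 P3 P4.
Proof. by move=> c_neq0 eN eD; rewrite /cross_ratio eN eD invfM mulrACA divff ?mul1r. Qed.

Lemma reciprocal_cross_ratio (A1 A2 A3 A4 B1 B2 B3 B4 : R[i]) :
  distinct4 A1 A2 A3 A4 -> distinct4 B1 B2 B3 B4 ->
  'Im (cross_ratio A1 A2 A3 A4) != 0 ->
  reciprocal_figures A1 A2 A3 A4 B1 B2 B3 B4 ->
  cross_ratio A1 A2 A3 A4 = cross_ratio B1 B2 B3 B4.
Proof.
move=> /and5P[a12 a13 a14 a23 /andP[_ a34]] /and5P[_ _ b14 b23 /andP[_ b34]] Im_neq0.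
have edgeP x y z : x != y -> parallel (x - y) z -> exists r : R, z = r%:C * (x - y).
  by rewrite -subr_eq0 => /parallel_scaleP scaleP /scaleP.
rewrite eq_sym in a13.
move=> [[/(edgeP _ _ _ a12)[r1 e1] /(edgeP _ _ _ a23)[r2 e2] /(edgeP _ _ _ a13)[r3 e3]]
        [/(edgeP _ _ _ a14)[r4 e4] _ /(edgeP _ _ _ a34)[r6 e6]]].
have r1_neq0 : r1 != 0 by move: b34; rewrite eq_sym (neq_scale e1) => /andP[].
have r2_neq0 : r2 != 0 by move: b14; rewrite eq_sym (neq_scale e2) => /andP[].
have r4_neq0 : r4 != 0 by move: b23; rewrite (neq_scale e4) => /andP[].
have r16 : r1 * r6 = r2 * r4.
  apply: (reciprocal_scalars (r3 := r3) Im_neq0 r1_neq0); first by rewrite -e4 -e1 -e3; ring.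
  by rewrite -e6 -e3 -e2; ring.
apply/esym/(@cross_ratio_rescale (- (r2 * r4)%:C)).
- by rewrite oppr_eq0 fmorph_eq0 mulf_neq0.
- by rewrite e6 -(opprB B4 B3) e1 -r16 rmorphM; ring.
- by rewrite e4 e2 rmorphM; ring.
Qed.

Definition general_position (P1 P2 P3 P4 : R[i]) : bool :=
  [&& ~~ collinear P4 P2 P3, ~~ collinear P4 P3 P1, ~~ collinear P4 P1 P2
    & ~~ collinear P1 P2 P3].

Lemma general_position_distinct4 (A1 A2 A3 A4 : R[i]) :
  general_position A1 A2 A3 A4 -> distinct4 A1 A2 A3 A4.
Proof.
move=> /and4P[c423 c431 c412 _]; apply/and5P; split; try apply/andP; try split;
  [apply: contraNneq c412 | apply: contraNneq c431 | apply: contraNneq c431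
  | apply: contraNneq c423 | apply: contraNneq c423 | apply: contraNneq c423];
  by move=> ->; rewrite /collinear ?subrr ?wedgexx ?wedge0l ?wedge0r.
Qed.

Lemma maxwell_closing (A1 A2 A3 A4 : R[i]) :
  let D1 := wedge (A2 - A4) (A3 - A4) in let D2 := wedge (A3 - A4) (A1 - A4) in
  let D3 := wedge (A1 - A4) (A2 - A4) in let S := wedge (A2 - A1) (A3 - A1) in
  [/\ D2%:C * (A1 - A2) - D3%:C * (A3 - A1) = S%:C * (A1 - A4),
      D3%:C * (A2 - A3) - D1%:C * (A1 - A2) = S%:C * (A2 - A4)
    & D1%:C * (A3 - A1) - D2%:C * (A2 - A3) = S%:C * (A3 - A4)].
Proof.
case: A1 A2 A3 A4 => [? ?] [? ?] [? ?] [? ?]; rewrite /wedge /=.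
by split; apply/eqP; rewrite eq_complex /=; apply/andP; split; apply/eqP; ring.
Qed.

Lemma maxwell_reciprocal (A1 A2 A3 A4 : R[i]) : general_position A1 A2 A3 A4 ->
  exists B1 B2 B3 B4 : R[i],
    distinct4 B1 B2 B3 B4 /\ reciprocal_figures A1 A2 A3 A4 B1 B2 B3 B4.
Proof.
move=> gp; have /and5P[a12 a13 a14 a23 /andP[a24 a34]] := general_position_distinct4 gp.
move: gp; rewrite /general_position /collinear => /and4P[D1_neq0 D2_neq0 D3_neq0 S_neq0].
pose D1 := wedge (A2 - A4) (A3 - A4); pose D2 := wedge (A3 - A4) (A1 - A4).
pose D3 := wedge (A1 - A4) (A2 - A4); pose S := wedge (A2 - A1) (A3 - A1).
have [c1 c2 c3] := maxwell_closing A1 A2 A3 A4.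
(* Maxwell's reciprocal figure: B4 - B_k is the side of A1 A2 A3 opposite to
   A_k, weighted by the signed areas of the two triangles A_i A_j A4 not
   containing it; by [maxwell_closing] the remaining edges then come out as real
   multiples of the A_i - A4. *)
pose B1 := - (D2 * D3)%:C * (A2 - A3); pose B2 := - (D1 * D3)%:C * (A3 - A1).
pose B3 := - (D1 * D2)%:C * (A1 - A2).
have e43 : 0 - B3 = (D1 * D2)%:C * (A1 - A2) by rewrite /B3; ring.
have e41 : 0 - B1 = (D2 * D3)%:C * (A2 - A3) by rewrite /B1; ring.
have e42 : 0 - B2 = (D1 * D3)%:C * (A3 - A1) by rewrite /B2; ring.
have e23 : B2 - B3 = (D1 * S)%:C * (A1 - A4).
  by rewrite rmorphM -mulrA -c1 /B2 /B3 !rmorphM; ring.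
have e31 : B3 - B1 = (D2 * S)%:C * (A2 - A4).
  by rewrite rmorphM -mulrA -c2 /B3 /B1 !rmorphM; ring.
have e12 : B1 - B2 = (D3 * S)%:C * (A3 - A4).
  by rewrite rmorphM -mulrA -c3 /B1 /B2 !rmorphM; ring.
exists B1, B2, B3, 0; split.
  rewrite /distinct4 [B1 == B3]eq_sym [B1 == 0]eq_sym [B2 == 0]eq_sym [B3 == 0]eq_sym.
  rewrite (neq_scale e12) (neq_scale e31) (neq_scale e41) (neq_scale e23) (neq_scale e42).
  have a31 : A3 != A1 by rewrite eq_sym.
  by rewrite (neq_scale e43) !mulf_neq0 // !subr_eq0 a12 a23 a24 a14 a34 a31.
by rewrite /reciprocal_figures e43 e41 e42 e23 e31 e12; do !split; apply: parallel_scale.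
Qed.

Lemma general_position_figure (q : R[i]) : 'Im q != 0 ->
  exists A1 A2 A3 A4 : R[i], general_position A1 A2 A3 A4 /\ cross_ratio A1 A2 A3 A4 = q.
Proof.
rewrite -complexIm fmorph_eq0; case: q => al be /= be_neq0.
pose q := al +i* be.
pose A1 := - ((2 * q - 1) * (2 - q)); pose A2 := (q + 1) * (2 - q).
pose A4 := (q + 1) * (2 * q - 1).
have gp : general_position A1 A2 0 A4.
  have E1 : wedge (A2 - A4) (0 - A4) = -3 * be * ((1 + al) ^+ 2 + be ^+ 2).
    by rewrite /A2 /A4 /q /wedge /=; ring.
  have E2 : wedge (0 - A4) (A1 - A4) = -3 * be * ((1 - 2 * al) ^+ 2 + 4 * be ^+ 2).
    by rewrite /A1 /A4 /q /wedge /=; ring.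
  have E3 : wedge (A1 - A4) (A2 - A4) = 18 * be * (al ^+ 2 - al + 1 + be ^+ 2).
    by rewrite /A1 /A2 /A4 /q /wedge /=; ring.
  have E4 : wedge (A2 - A1) (0 - A1) = 3 * be * ((al - 2) ^+ 2 + be ^+ 2).
    by rewrite /A1 /A2 /q /wedge /=; ring.
  have be2_gt0 : 0 < be ^+ 2 by rewrite exprn_even_gt0.
  rewrite /general_position /collinear E1 E2 E3 E4 !mulf_neq0 ?oppr_eq0 ?pnatr_eq0 //;
    apply: lt0r_neq0; move: (sqr_ge0 (1 + al)) (sqr_ge0 (1 - 2 * al)) (sqr_ge0 (al - 2)); nra.
exists A1, A2, 0, A4; split=> //.
have /and5P[_ _ a14 a23 _] := general_position_distinct4 gp.
rewrite /cross_ratio (_ : (A1 - A2) * (0 - A4) = q * ((A2 - 0) * (A4 - A1))).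
  by rewrite mulfK // mulf_neq0 // subr_eq0 // eq_sym.
by apply/eqP; rewrite eq_complex /A1 /A2 /A4 /q /=; apply/andP; split; apply/eqP; ring.
Qed.

End PlaneFigures.

Lemma homography_adjK (K : fieldType) (h11 h12 h21 h22 u v z : K) :
  h11 * h22 - h12 * h21 != 0 -> (u != 0) || (v != 0) ->
  u * (h21 * z + h22) = v * (h11 * z + h12) ->
  h11 * v - h21 * u != 0 /\ (h22 * u - h12 * v) / (h11 * v - h21 * u) = z.
Proof.
move=> det_neq0 uv_neq0 uvz.
have {}uvz : u * (h21 * z + h22) - v * (h11 * z + h12) = 0 by rewrite uvz subrr.
have den_neq0 : h11 * v - h21 * u != 0.
  apply: contraTneq uv_neq0 => den0; rewrite negb_or !negbK.
  have u_det : u * (h11 * h22 - h12 * h21) = (h11 * v - h21 * u) * (h11 * z + h12)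
      + h11 * (u * (h21 * z + h22) - v * (h11 * z + h12)) by ring.
  have v_det : v * (h11 * h22 - h12 * h21) = (h11 * v - h21 * u) * (h21 * z + h22)
      + h21 * (u * (h21 * z + h22) - v * (h11 * z + h12)) by ring.
  move: u_det v_det; rewrite den0 uvz !mul0r !mulr0 addr0 => /eqP + /eqP.
  by rewrite !mulf_eq0 (negPf det_neq0) !orbF => -> ->.
split=> //; apply: (mulIf den_neq0); rewrite mulfVK //.
by apply/eqP; rewrite -subr_eq0 -uvz; apply/eqP; ring.
Qed.

Section Moebius.
Local Open Scope complex_scope.
Variable R : rcfType.

Lemma cross_ratioZ (u P1 P2 P3 P4 : R[i]) : u != 0 ->
  cross_ratio (u * P1) (u * P2) (u * P3) (u * P4) = cross_ratio P1 P2 P3 P4.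
Proof. by move=> u_neq0; apply: (@cross_ratio_rescale _ (u * u)); rewrite ?mulf_neq0 //; ring. Qed.

Definition mob_den (M : mobius R) (z : R[i]) : R[i] := mob_c M * z + mob_d M.

Lemma mob_imgE (M : mobius R) z : mob_den M z != 0 ->
  mob_img M z = (mob_a M * z + mob_b M) / mob_den M z.
Proof. by case: M => a b c d det_neq0 /= den_neq0; rewrite /mob_img /= (negPf den_neq0). Qed.

Lemma mob_imgB (M : mobius R) x y : mob_den M x != 0 -> mob_den M y != 0 ->
  mob_img M x - mob_img M y
  = (mob_a M * mob_d M - mob_b M * mob_c M) * (x - y) / (mob_den M x * mob_den M y).
Proof.
move=> dx dy; rewrite !mob_imgE //; move: dx dy; rewrite /mob_den => dx dy.
by field; rewrite dx dy.
Qed.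

Lemma mob_img_inj (M : mobius R) x y : mob_den M x != 0 -> mob_den M y != 0 ->
  x != y -> mob_img M x != mob_img M y.
Proof.
by move=> dx dy xy; rewrite -subr_eq0 mob_imgB // !mulf_neq0 ?invr_eq0 ?mulf_neq0 ?(mob_det M) // subr_eq0.
Qed.

Lemma cross_ratio_mob (M : mobius R) (P1 P2 P3 P4 : R[i]) :
  mob_den M P1 != 0 -> mob_den M P2 != 0 -> mob_den M P3 != 0 -> mob_den M P4 != 0 ->
  cross_ratio (mob_img M P1) (mob_img M P2) (mob_img M P3) (mob_img M P4)
  = cross_ratio P1 P2 P3 P4.
Proof.
move=> d1 d2 d3 d4.
pose k := mob_a M * mob_d M - mob_b M * mob_c M.
apply: (@cross_ratio_rescale _ (k ^+ 2 / (mob_den M P1 * mob_den M P2 * mob_den M P3 * mob_den M P4))).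
- by rewrite mulf_neq0 ?expf_neq0 ?mob_det // invr_eq0 !mulf_neq0.
- by rewrite !mob_imgB // /k; field; rewrite d1 d2 d3 d4.
- by rewrite !mob_imgB // /k; field; rewrite d1 d2 d3 d4.
Qed.

Lemma mob_den_neq0 (M : mobius R) Ps z : mob_app M Ps = None -> Ps <> Some z ->
  mob_den M z != 0.
Proof.
rewrite /mob_den; case: M => a b c d det_neq0 /=; case: Ps => [w|] /=.
- case: ifP => // /eqP dw _ wz; apply/eqP => dz.
  have /eqP : c * (w - z) = 0.
    by transitivity ((c * w + d) - (c * z + d)); [ring | rewrite dw dz subrr].
  rewrite mulf_eq0 subr_eq0 => /orP[/eqP c0 | /eqP wz']; last by apply: wz; rewrite wz'.
  move: dz; rewrite c0 mul0r add0r => d0.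
  by move: det_neq0; rewrite c0 d0 !mulr0 subrr eqxx.
- case: ifP => // /eqP c0 _ _; rewrite c0 mul0r add0r.
  by apply: contra det_neq0 => /eqP ->; rewrite c0 !mulr0 subrr.
Qed.

Lemma mob_pole (M : mobius R) :
  exists Ps, mob_app M Ps = None /\ forall z, mob_den M z != 0 -> Ps <> Some z.
Proof.
rewrite /mob_den; case: M => a b c d det_neq0 /=.
have [c0 | c_neq0] := eqVneq c 0; first by exists None.
exists (Some (- d / c)); split; first by rewrite /= mulrC divfK // addNr eqxx.
by move=> z + [dcz]; rewrite -dcz mulrC divfK // addNr eqxx.
Qed.

Lemma mob_interp (P1 P2 P3 P4 Q1 Q2 Q3 Q4 : R[i]) :
  distinct4 P1 P2 P3 P4 -> distinct4 Q1 Q2 Q3 Q4 ->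
  cross_ratio P1 P2 P3 P4 = cross_ratio Q1 Q2 Q3 Q4 ->
  exists M : mobius R,
    [/\ mob_den M P1 != 0, mob_den M P2 != 0, mob_den M P3 != 0 & mob_den M P4 != 0] /\
    [/\ mob_img M P1 = Q1, mob_img M P2 = Q2, mob_img M P3 = Q3 & mob_img M P4 = Q4].
Proof.
move=> /and5P[p12 p13 p14 p23 /andP[p24 p34]] /and5P[q12 q13 q14 q23 /andP[q24 q34]] eqQ.
(* M is H^-1 o G, where G and H send (P1, P2, P3) and (Q1, Q2, Q3) to
   (0, 1, oo); the equality of cross-ratios says that G P4 = H Q4. *)
pose h11 := Q2 - Q3; pose h12 := - (Q2 - Q3) * Q1.
pose h21 := Q2 - Q1; pose h22 := - (Q2 - Q1) * Q3.
pose u z := (P2 - P3) * (z - P1); pose v z := (P2 - P1) * (z - P3).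
have detH : h11 * h22 - h12 * h21 != 0.
  rewrite (_ : _ - _ = (Q2 - Q3) * (Q2 - Q1) * (Q1 - Q3)); last by rewrite /h11 /h12 /h21 /h22; ring.
  by rewrite !mulf_neq0 // subr_eq0 // eq_sym.
pose a := h22 * (P2 - P3) - h12 * (P2 - P1); pose b := h12 * (P2 - P1) * P3 - h22 * (P2 - P3) * P1.
pose c := h11 * (P2 - P1) - h21 * (P2 - P3); pose d := h21 * (P2 - P3) * P1 - h11 * (P2 - P1) * P3.
have detM : a * d - b * c != 0.
  rewrite (_ : _ - _ = (h11 * h22 - h12 * h21) * ((P2 - P3) * (P2 - P1) * (P1 - P3))).
    by rewrite !mulf_neq0 // subr_eq0 // eq_sym.
  by rewrite /a /b /c /d; ring.
exists (Mobius detM).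
have sends z z' : (u z != 0) || (v z != 0) -> u z * (h21 * z' + h22) = v z * (h11 * z' + h12) ->
    mob_den (Mobius detM) z != 0 /\ mob_img (Mobius detM) z = z'.
  move=> uv_neq0 /(homography_adjK detH uv_neq0).
  have -> : h11 * v z - h21 * u z = mob_den (Mobius detM) z by rewrite /mob_den /= /c /d /u /v; ring.
  have -> : h22 * u z - h12 * v z = a * z + b by rewrite /a /b /u /v; ring.
  by move=> [den_neq0 <-]; rewrite mob_imgE.
have [s1 s2 s3 s4] : [/\ mob_den (Mobius detM) P1 != 0 /\ mob_img (Mobius detM) P1 = Q1,
    mob_den (Mobius detM) P2 != 0 /\ mob_img (Mobius detM) P2 = Q2,
    mob_den (Mobius detM) P3 != 0 /\ mob_img (Mobius detM) P3 = Q3 &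
    mob_den (Mobius detM) P4 != 0 /\ mob_img (Mobius detM) P4 = Q4].
  split; apply: sends.
  - by apply/orP; right; rewrite mulf_neq0 // subr_eq0 // eq_sym.
  - by rewrite /u /h11 /h12; ring.
  - by apply/orP; right; rewrite mulf_neq0 // subr_eq0 // eq_sym.
  - by rewrite /u /v /h11 /h12 /h21 /h22; ring.
  - by apply/orP; left; rewrite mulf_neq0 // subr_eq0 // eq_sym.
  - by rewrite /v /h21 /h22; ring.
  - by apply/orP; right; rewrite mulf_neq0 // subr_eq0 // eq_sym.
  have dP : (P2 - P3) * (P4 - P1) != 0 by rewrite mulf_neq0 // subr_eq0 // eq_sym.
  have dQ : (Q2 - Q3) * (Q4 - Q1) != 0 by rewrite mulf_neq0 // subr_eq0 // eq_sym.
  move: eqQ; rewrite /cross_ratio => /eqP; rewrite eqr_div // => /eqP eqQ.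
  rewrite /u /v /h11 /h12 /h21 /h22.
  by transitivity ((Q1 - Q2) * (Q3 - Q4) * ((P2 - P3) * (P4 - P1))); [ring | rewrite -eqQ; ring].
by case: s1 s2 s3 s4 => [? ?] [? ?] [? ?] [? ?].
Qed.

End Moebius.

Section Reciprocal46.
Variable R : rcfType.

Lemma distinct4Z (u P1 P2 P3 P4 : R[i]) : u != 0 ->
  distinct4 P1 P2 P3 P4 -> distinct4 (u * P1) (u * P2) (u * P3) (u * P4).
Proof. by move=> u_neq0; rewrite /distinct4 !(inj_eq (mulfI u_neq0)). Qed.

Lemma config46_mob_img (M : mobius R) (P1 P2 P3 P4 : R[i]) Ps :
  config46 P1 P2 P3 P4 Ps -> mob_app M Ps = None ->
  distinct4 (mob_img M P1) (mob_img M P2) (mob_img M P3) (mob_img M P4) /\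
  cross_ratio (mob_img M P1) (mob_img M P2) (mob_img M P3) (mob_img M P4)
  = cross_ratio P1 P2 P3 P4.
Proof.
move=> [/and5P[p12 p13 p14 p23 /andP[p24 p34]] [s1 s2 s3 s4]] MPs.
have [d1 d2 d3 d4] := And4 (mob_den_neq0 MPs s1) (mob_den_neq0 MPs s2)
  (mob_den_neq0 MPs s3) (mob_den_neq0 MPs s4).
by split; [rewrite /distinct4 !mob_img_inj | exact: cross_ratio_mob].
Qed.

Lemma cross_ratio_eq_of_reciprocal46 (F1 F2 F3 F123 F23 F13 F12 F : R[i]) Ps Ps' :
  'Im (cross_ratio F1 F2 F3 F123) != 0 ->
  config46 F1 F2 F3 F123 Ps -> config46 F23 F13 F12 F Ps' ->
  reciprocal46 F1 F2 F3 F123 F23 F13 F12 F Ps Ps' ->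
  cross_ratio F1 F2 F3 F123 = cross_ratio F23 F13 F12 F.
Proof.
move=> Im_neq0 cF cF' [M [M' [u [MPs M'Ps' norm_u recip]]]].
have u_neq0 : u != 0 by rewrite -normr_eq0 norm_u oner_eq0.
have [dA QA] := config46_mob_img cF MPs.
have [dB QB] := config46_mob_img cF' M'Ps'.
rewrite -QA -QB -[RHS](cross_ratioZ _ _ _ _ u_neq0).
by apply: reciprocal_cross_ratio => //; [exact: distinct4Z | rewrite QA].
Qed.

Lemma reciprocal46_of_cross_ratio_eq (F1 F2 F3 F123 F23 F13 F12 F : R[i]) :
  distinct4 F1 F2 F3 F123 -> distinct4 F23 F13 F12 F ->
  'Im (cross_ratio F1 F2 F3 F123) != 0 ->
  cross_ratio F1 F2 F3 F123 = cross_ratio F23 F13 F12 F ->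
  exists Ps Ps' : sphere R,
    [/\ config46 F1 F2 F3 F123 Ps, config46 F23 F13 F12 F Ps'
      & reciprocal46 F1 F2 F3 F123 F23 F13 F12 F Ps Ps'].
Proof.
move=> dF dF' Im_neq0 eqQ.
have [A1 [A2 [A3 [A4 [gpA QA]]]]] := general_position_figure Im_neq0.
have dA := general_position_distinct4 gpA.
have [B1 [B2 [B3 [B4 [dB recip]]]]] := maxwell_reciprocal gpA.
have QB : cross_ratio A1 A2 A3 A4 = cross_ratio B1 B2 B3 B4.
  by apply: reciprocal_cross_ratio; rewrite ?QA.
have [M [[d1 d2 d3 d4] [m1 m2 m3 m4]]] := mob_interp dF dA (esym QA).
have [M' [[d1' d2' d3' d4'] [m1' m2' m3' m4']]] :=
  mob_interp dF' dB (etrans (esym eqQ) (etrans (esym QA) QB)).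
have [Ps [MPs Ps_fin]] := mob_pole M.
have [Ps' [M'Ps' Ps'_fin]] := mob_pole M'.
exists Ps, Ps'; split; [by split=> //; split; apply: Ps_fin
                       | by split=> //; split; apply: Ps'_fin |].
exists M, M', 1; split=> //; first exact: normr1.
by rewrite /= !mul1r m1 m2 m3 m4 m1' m2' m3' m4'.
Qed.

End Reciprocal46.

Theorem theorem2 (R : rcfType) (F1 F2 F3 F123 F23 F13 F12 F : R[i]) :
  (* genericity: pairwise distinct points in each quadruplet, neither
     quadruplet concyclic (non-real cross-ratio) *)
  [&& F1 != F2, F1 != F3, F1 != F123, F2 != F3, F2 != F123 & F3 != F123] ->
  [&& F23 != F13, F23 != F12, F23 != F, F13 != F12, F13 != F & F12 != F] ->
  'Im (cross_ratio F1 F2 F3 F123) != 0 ->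
  'Im (cross_ratio F23 F13 F12 F) != 0 ->
  ((exists Ps Ps' : sphere R,
      [/\ config46 F1 F2 F3 F123 Ps, config46 F23 F13 F12 F Ps' &
          reciprocal46 F1 F2 F3 F123 F23 F13 F12 F Ps Ps'])
   <-> cross_ratio F1 F2 F3 F123 = cross_ratio F23 F13 F12 F).
Proof.
move=> dF dF' Im_neq0 _; split=> [[Ps [Ps' [cF cF' recip]]] | eqQ].
  exact: cross_ratio_eq_of_reciprocal46 Im_neq0 cF cF' recip.
exact: reciprocal46_of_cross_ratio_eq.
Qed.
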